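(* Let $\rho_n$ ($n\ge0$) be constants, and for each pair $s,\delta>0$ with $1/s$ an integer and $\delta<s/2$ let $A=A_{s,\delta}$ be a $C^\infty$ diffeomorphism of $[0,1]$ such that: $A=\mathrm{Id}+a$ with $a$ a non-negative $C^\infty$ function of period $s$; $A(0)=0$, $A(\delta)=s-\delta$, $A(s)=s$; $\delta/(2s)\le A'\le 2s/\delta$; and $\|A\|_n\le\rho_n/\delta^{n^2}$ for every $n\ge0$. Then for any $n\ge0$ and any $C^n$ diffeomorphism $h$ of $[0,1]$ (equivalently of the circle $\mathbb R/\mathbb Z\cong[0,1]$) there is a constant $\tilde c(h,n)$, depending on $h$ and $n$ but not on $\delta$ and $s$, such that $$\|A_{s,\delta}\circ h\|_n\le \tilde c(h,n)/\delta^{n^2}$$ for all such $s,\delta$.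
   Context: For a $C^n$ diffeomorphism $g$ of $[0,1]$, $\|g\|_n^*=\max|g^{(i)}(x)|$, the maximum over all $x\in[0,1]$ and $0\le i\le n$, and $\|g\|_n=\max\{\|g\|_n^*,\|g^{-1}\|_n^*\}$. *)

From Stdlib Require Import Reals.
From Coquelicot Require Import Coquelicot.
Open Scope R_scope.

(* Functions of [0,1] are represented by functions R -> R (any C^n function
   on [0,1] extends to a C^n function on R); only values/derivatives on
   [0,1] enter the norms. *)

Definition Cn (n : nat) (g : R -> R) : Prop :=
  forall (k : nat) (x : R), (k <= n)%nat ->
    ex_derive_n g k x /\ continuous (Derive_n g k) x.

Definition Cn_diffeo (n : nat) (g ginv : R -> R) : Prop :=
  Cn n g /\ Cn n ginv /\
  (forall x, 0 <= x <= 1 -> 0 <= g x <= 1 /\ ginv (g x) = x) /\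
  (forall y, 0 <= y <= 1 -> 0 <= ginv y <= 1 /\ g (ginv y) = y).

Definition cnorm_star (n : nat) (g : R -> R) : Rbar :=
  Lub_Rbar (fun r => exists (i : nat) (x : R),
    (i <= n)%nat /\ 0 <= x <= 1 /\ r = Rabs (Derive_n g i x)).

Definition cnorm (n : nat) (g ginv : R -> R) : Rbar :=
  match Rbar_le_dec (cnorm_star n g) (cnorm_star n ginv) with
  | left _ => cnorm_star n ginv
  | right _ => cnorm_star n g
  end.

Definition admissible (s delta : R) : Prop :=
  0 < s /\ 0 < delta /\ delta < s / 2 /\ exists k : nat, / s = INR k.

Definition A_hyp (rho : nat -> R) (s delta : R) (A Ainv : R -> R) : Prop :=
  (forall n, Cn_diffeo n A Ainv) /\
  (exists a : R -> R,
     (forall n, Cn n a) /\ (forall x, 0 <= a x) /\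
     (forall x, a (x + s) = a x) /\
     (forall x, 0 <= x <= 1 -> A x = x + a x)) /\
  A 0 = 0 /\ A delta = s - delta /\ A s = s /\
  (forall x, 0 <= x <= 1 ->
     delta / (2 * s) <= Derive A x <= 2 * s / delta) /\
  (forall n : nat, Rbar_le (cnorm n A Ainv) (Finite (rho n / delta ^ (n * n)))).

(* By Faà di Bruno, the i-th derivative of f o g is a polynomial, independent of f and g,
   in the f^(k) o g and g^(j) with k, j <= i; each monomial has a single f-factor and
   g-factors whose orders add up to at most i.  For A o h only the f-factor grows, like
   delta^-(k^2) <= delta^-(n^2).  For h^-1 o A^-1 the g-factors grow, and their product
   is bounded by delta^-(sum j_l^2) <= delta^-((sum j_l)^2) <= delta^-(n^2). *)

From Stdlib Require Import Reals Lia Lra.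
From Coquelicot Require Import Coquelicot.
Open Scope R_scope.

Inductive chain_expr :=
  | Outer (k : nat)
  | Inner (j : nat)
  | Sum (a b : chain_expr)
  | Prod (a b : chain_expr).

Fixpoint eval (f g : R -> R) (e : chain_expr) (x : R) : R :=
  match e with
  | Outer k => Derive_n f k (g x)
  | Inner j => Derive_n g j x
  | Sum a b => eval f g a x + eval f g b x
  | Prod a b => eval f g a x * eval f g b x
  end.

Fixpoint deriv_expr (e : chain_expr) : chain_expr :=
  match e with
  | Outer k => Prod (Outer (S k)) (Inner 1)
  | Inner j => Inner (S j)
  | Sum a b => Sum (deriv_expr a) (deriv_expr b)
  | Prod a b => Sum (Prod (deriv_expr a) b) (Prod a (deriv_expr b))
  end.

Fixpoint comp_deriv_expr (i : nat) : chain_expr :=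
  match i with
  | O => Outer 0
  | S i => deriv_expr (comp_deriv_expr i)
  end.

Fixpoint order (e : chain_expr) : nat :=
  match e with
  | Outer k => k
  | Inner j => j
  | Sum a b | Prod a b => Nat.max (order a) (order b)
  end.

Lemma order_deriv_expr (e : chain_expr) : (order (deriv_expr e) <= S (order e))%nat.
Proof. induction e; simpl; lia. Qed.

Lemma order_comp_deriv_expr (i : nat) : (order (comp_deriv_expr i) <= i)%nat.
Proof. induction i; simpl; [lia|]. pose proof (order_deriv_expr (comp_deriv_expr i)); lia. Qed.

Lemma is_derive_eval (N : nat) (f g : R -> R) (e : chain_expr) (x : R) :
  Cn N f -> Cn N g -> (order e < N)%nat ->
  is_derive (eval f g e) x (eval f g (deriv_expr e) x).
Proof.
  intros Cf Cg. induction e as [k|j|a IHa b IHb|a IHa b IHb]; simpl; intros Hord.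
  - assert (Df : is_derive (Derive_n f k) (g x) (Derive_n f (S k) (g x))).
    { apply Derive_correct. apply (Cf (S k) (g x)); lia. }
    assert (Dg : is_derive g x (Derive_n g 1 x)).
    { apply Derive_correct. apply (Cg 1%nat x); lia. }
    rewrite Rmult_comm. exact (is_derive_comp _ _ _ _ _ Df Dg).
  - apply Derive_correct. apply (Cg (S j) x); lia.
  - apply (is_derive_plus (eval f g a) (eval f g b)); [apply IHa | apply IHb]; lia.
  - apply (is_derive_mult (eval f g a) (eval f g b)); [apply IHa; lia | apply IHb; lia |].
    intros; apply Rmult_comm.
Qed.

Lemma Derive_n_comp_eval (N i : nat) (f g : R -> R) (x : R) :
  Cn N f -> Cn N g -> (i <= N)%nat ->
  Derive_n (fun t => f (g t)) i x = eval f g (comp_deriv_expr i) x.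
Proof.
  intros Cf Cg. revert x. induction i as [|i IHi]; intros x Hi; simpl; [reflexivity|].
  rewrite (Derive_ext _ (eval f g (comp_deriv_expr i))) by (intro t; apply IHi; lia).
  apply is_derive_unique, (is_derive_eval N); auto.
  pose proof (order_comp_deriv_expr i); lia.
Qed.

(* [grows = true]: the outer derivatives f^(k) may grow like D^(k^2); [grows = false]:
   the inner ones g^(j) may.  A monomial is then bounded by D^(weight^2), because squares
   are superadditive. *)
Fixpoint weight (grows : bool) (e : chain_expr) : nat :=
  match e with
  | Outer k => if grows then k else 0%nat
  | Inner j => if grows then 0%nat else j
  | Sum a b => Nat.max (weight grows a) (weight grows b)
  | Prod a b => (weight grows a + weight grows b)%nat
  end.

Fixpoint coef (cF cG : nat -> R) (e : chain_expr) : R :=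
  match e with
  | Outer k => cF k
  | Inner j => cG j
  | Sum a b => coef cF cG a + coef cF cG b
  | Prod a b => coef cF cG a * coef cF cG b
  end.

Lemma weight_deriv_expr (grows : bool) (e : chain_expr) :
  (weight grows (deriv_expr e) <= S (weight grows e))%nat.
Proof. induction e; destruct grows; simpl; lia. Qed.

Lemma weight_comp_deriv_expr (grows : bool) (i : nat) :
  (weight grows (comp_deriv_expr i) <= i)%nat.
Proof.
  induction i; simpl; [destruct grows; lia|].
  pose proof (weight_deriv_expr grows (comp_deriv_expr i)); lia.
Qed.

Lemma coef_ge0 (cF cG : nat -> R) (e : chain_expr) :
  (forall k, 0 <= cF k) -> (forall j, 0 <= cG j) -> 0 <= coef cF cG e.
Proof.
  intros HF HG. induction e; simpl; auto.
  - now apply Rplus_le_le_0_compat.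
  - now apply Rmult_le_pos.
Qed.

Lemma eval_bound (grows : bool) (N : nat) (f g : R -> R) (cF cG : nat -> R) (D x : R)
  (e : chain_expr) :
  1 <= D -> (forall k, 0 <= cF k) -> (forall j, 0 <= cG j) -> (order e <= N)%nat ->
  (forall k, (k <= N)%nat ->
     Rabs (Derive_n f k (g x)) <= cF k * D ^ (if grows then k * k else 0)%nat) ->
  (forall j, (j <= N)%nat ->
     Rabs (Derive_n g j x) <= cG j * D ^ (if grows then 0 else j * j)%nat) ->
  Rabs (eval f g e x) <= coef cF cG e * D ^ (weight grows e * weight grows e).
Proof.
  intros HD HcF HcG Hord HF HG.
  induction e as [k|j|a IHa b IHb|a IHa b IHb]; simpl in *.
  - destruct grows; simpl; [apply HF; lia|]. apply (HF k); lia.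
  - destruct grows; simpl; [|apply HG; lia]. apply (HG j); lia.
  - set (m := Nat.max (weight grows a) (weight grows b)).
    assert (Ba := IHa ltac:(lia)). assert (Bb := IHb ltac:(lia)).
    pose proof (coef_ge0 cF cG a HcF HcG). pose proof (coef_ge0 cF cG b HcF HcG).
    assert (Pa : D ^ (weight grows a * weight grows a) <= D ^ (m * m))
      by (apply Rle_pow; [lra | unfold m; nia]).
    assert (Pb : D ^ (weight grows b * weight grows b) <= D ^ (m * m))
      by (apply Rle_pow; [lra | unfold m; nia]).
    eapply Rle_trans; [apply Rabs_triang|].
    rewrite Rmult_plus_distr_r.
    apply Rplus_le_compat; eapply Rle_trans; eauto; apply Rmult_le_compat_l; auto.
  - assert (Ba := IHa ltac:(lia)). assert (Bb := IHb ltac:(lia)).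
    pose proof (coef_ge0 cF cG a HcF HcG). pose proof (coef_ge0 cF cG b HcF HcG).
    rewrite Rabs_mult.
    eapply Rle_trans; [apply Rmult_le_compat; [apply Rabs_pos | apply Rabs_pos | exact Ba | exact Bb]|].
    replace (coef cF cG a * D ^ _ * (coef cF cG b * D ^ _))
      with (coef cF cG a * coef cF cG b
            * D ^ (weight grows a * weight grows a + weight grows b * weight grows b))
      by (rewrite pow_add; ring).
    apply Rmult_le_compat_l; [now apply Rmult_le_pos|].
    apply Rle_pow; [lra | nia].
Qed.

Lemma bounded_family_le (n : nat) (P : nat -> R -> Prop) :
  (forall j, (j <= n)%nat -> exists M, forall r, P j r -> r <= M) ->
  exists M, forall j r, (j <= n)%nat -> P j r -> r <= M.
Proof.
  induction n as [|n IHn]; intros H.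
  - destruct (H 0%nat (Nat.le_refl _)) as [M HM].
    exists M. intros j r Hj. replace j with 0%nat by lia. apply HM.
  - destruct IHn as [M1 HM1]; [intros j Hj; apply H; lia|].
    destruct (H (S n) (Nat.le_refl _)) as [M2 HM2].
    exists (Rmax M1 M2). intros j r Hj Hr.
    destruct (Nat.eq_dec j (S n)) as [->|Hne].
    + eapply Rle_trans; [apply HM2, Hr | apply Rmax_r].
    + eapply Rle_trans; [apply (HM1 j); [lia | exact Hr] | apply Rmax_l].
Qed.

Lemma Derive_n_comp_bound (grows : bool) (cF cG : nat -> R) (n : nat) :
  (forall k, 0 <= cF k) -> (forall j, 0 <= cG j) ->
  exists C, forall (f g : R -> R) (D : R), Cn n f -> Cn n g -> 1 <= D ->
  (forall x, 0 <= x <= 1 ->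
     (forall k, (k <= n)%nat ->
        Rabs (Derive_n f k (g x)) <= cF k * D ^ (if grows then k * k else 0)%nat) /\
     (forall j, (j <= n)%nat ->
        Rabs (Derive_n g j x) <= cG j * D ^ (if grows then 0 else j * j)%nat)) ->
  forall i x, (i <= n)%nat -> 0 <= x <= 1 ->
    Rabs (Derive_n (fun t => f (g t)) i x) <= C * D ^ (n * n).
Proof.
  intros HcF HcG.
  destruct (bounded_family_le n (fun i r => r = coef cF cG (comp_deriv_expr i)))
    as [C HC]; [intros j _; exists (coef cF cG (comp_deriv_expr j)); intros r ->; lra|].
  exists C. intros f g D Cf Cg HD Hbounds i x Hi Hx.
  destruct (Hbounds x Hx) as [HF HG].
  rewrite (Derive_n_comp_eval n i f g x Cf Cg Hi).
  eapply Rle_trans.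
  { pose proof (order_comp_deriv_expr i). apply (eval_bound grows n f g cF cG); auto; [lra | lia]. }
  pose proof (weight_comp_deriv_expr grows i).
  apply Rmult_le_compat.
  - now apply coef_ge0.
  - apply pow_le; lra.
  - now apply (HC i).
  - apply Rle_pow; [lra | nia].
Qed.

Lemma Cn_Derive_n_bounded (n : nat) (h : R -> R) :
  Cn n h -> exists M, 0 <= M /\
  forall j x, (j <= n)%nat -> 0 <= x <= 1 -> Rabs (Derive_n h j x) <= M.
Proof.
  intros Ch.
  destruct (bounded_family_le n
              (fun j r => exists x, 0 <= x <= 1 /\ r = Rabs (Derive_n h j x))) as [M HM].
  { intros j Hj.
    destruct (continuity_ab_maj (fun x => Rabs (Derive_n h j x)) 0 1) as [xmax [Hmax _]].
    - lra.
    - intros c _. apply continuity_pt_filterlim, continuous_Rabs_comp, (Ch j c Hj).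
    - exists (Rabs (Derive_n h j xmax)). intros r (x & Hx & ->). now apply Hmax. }
  exists (Rmax 0 M). split; [apply Rmax_l|].
  intros j x Hj Hx. eapply Rle_trans; [apply (HM j); eauto | apply Rmax_r].
Qed.

Lemma cnorm_star_le (n : nat) (g : R -> R) (c : R) :
  (forall i x, (i <= n)%nat -> 0 <= x <= 1 -> Rabs (Derive_n g i x) <= c) ->
  Rbar_le (cnorm_star n g) (Finite c).
Proof.
  intros H. apply (proj2 (Lub_Rbar_correct _)).
  intros r (i & x & Hi & Hx & ->). now apply H.
Qed.

Lemma Derive_n_le_cnorm_star (n i : nat) (g : R -> R) (x : R) :
  (i <= n)%nat -> 0 <= x <= 1 ->
  Rbar_le (Finite (Rabs (Derive_n g i x))) (cnorm_star n g).
Proof. intros Hi Hx. apply (proj1 (Lub_Rbar_correct _)). now exists i, x. Qed.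

Lemma cnorm_star_le_cnorm (n : nat) (g ginv : R -> R) :
  Rbar_le (cnorm_star n g) (cnorm n g ginv) /\ Rbar_le (cnorm_star n ginv) (cnorm n g ginv).
Proof.
  unfold cnorm. destruct Rbar_le_dec as [H|H].
  - split; [exact H | apply Rbar_le_refl].
  - split; [apply Rbar_le_refl | apply Rbar_lt_le, Rbar_not_le_lt, H].
Qed.

Lemma cnorm_le (n : nat) (g ginv : R -> R) (c : R) :
  Rbar_le (cnorm_star n g) (Finite c) -> Rbar_le (cnorm_star n ginv) (Finite c) ->
  Rbar_le (cnorm n g ginv) (Finite c).
Proof. unfold cnorm. destruct Rbar_le_dec; auto. Qed.

Lemma Derive_n_le_of_cnorm (n : nat) (g ginv : R -> R) (c y : R) :
  Rbar_le (cnorm n g ginv) (Finite c) -> 0 <= y <= 1 ->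
  Rabs (Derive_n g n y) <= c /\ Rabs (Derive_n ginv n y) <= c.
Proof.
  intros Hc Hy. destruct (cnorm_star_le_cnorm n g ginv) as [Hg Hgi].
  pose proof (Derive_n_le_cnorm_star n n g y (Nat.le_refl _) Hy) as Bg.
  pose proof (Derive_n_le_cnorm_star n n ginv y (Nat.le_refl _) Hy) as Bgi.
  split.
  - exact (Rbar_le_trans _ _ _ Bg (Rbar_le_trans _ _ _ Hg Hc)).
  - exact (Rbar_le_trans _ _ _ Bgi (Rbar_le_trans _ _ _ Hgi Hc)).
Qed.

Lemma admissible_inv_delta_ge1 (s delta : R) : admissible s delta -> 1 <= / delta.
Proof.
  intros (Hs & Hd & Hds & k & Hk).
  assert (Hk1 : 1 <= / s).
  { rewrite Hk. destruct k as [|k].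
    - simpl in Hk. pose proof (Rinv_0_lt_compat s Hs). lra.
    - apply (le_INR 1); lia. }
  assert (Hs1 : s <= 1).
  { rewrite <- (Rinv_inv s), <- Rinv_1. apply Rinv_le_contravar; lra. }
  rewrite <- Rinv_1. apply Rinv_le_contravar; lra.
Qed.

Lemma A_hyp_Derive_n_bound (rho : nat -> R) (s delta : R) (A Ainv : R -> R) (k : nat) (y : R) :
  A_hyp rho s delta A Ainv -> 0 < delta -> 0 <= y <= 1 ->
  Rabs (Derive_n A k y) <= Rabs (rho k) * (/ delta) ^ (k * k) /\
  Rabs (Derive_n Ainv k y) <= Rabs (rho k) * (/ delta) ^ (k * k).
Proof.
  intros (_ & _ & _ & _ & _ & _ & Hnorm) Hd Hy.
  assert (Hrho : rho k / delta ^ (k * k) <= Rabs (rho k) * (/ delta) ^ (k * k)).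
  { unfold Rdiv. rewrite <- pow_inv.
    apply Rmult_le_compat_r; [apply pow_le; left; now apply Rinv_0_lt_compat | apply Rle_abs]. }
  destruct (Derive_n_le_of_cnorm k A Ainv _ y (Hnorm k) Hy). split; lra.
Qed.

Theorem lemma3p4 (rho : nat -> R) (A Ainv : R -> R -> R -> R)
  (HA : forall s delta, admissible s delta -> A_hyp rho s delta (A s delta) (Ainv s delta))
  (n : nat) (h hinv : R -> R) (Hh : Cn_diffeo n h hinv) :
  exists c : R, forall s delta, admissible s delta ->
    Rbar_le (cnorm n (fun x => A s delta (h x)) (fun y => hinv (Ainv s delta y)))
            (Finite (c / delta ^ (n * n))).
Proof.
  destruct Hh as (Ch & Chinv & Hh_maps & _).
  destruct (Cn_Derive_n_bounded n h Ch) as (Mh & HMh0 & HMh).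
  destruct (Cn_Derive_n_bounded n hinv Chinv) as (Mi & HMi0 & HMi).
  destruct (Derive_n_comp_bound true (fun k => Rabs (rho k)) (fun _ => Mh) n)
    as [C1 HC1]; [intro; apply Rabs_pos | intro; exact HMh0 |].
  destruct (Derive_n_comp_bound false (fun _ => Mi) (fun j => Rabs (rho j)) n)
    as [C2 HC2]; [intro; exact HMi0 | intro; apply Rabs_pos |].
  exists (Rmax C1 C2). intros s delta Had.
  pose proof (HA s delta Had) as HAsd.
  assert (Hd : 0 < delta) by apply Had.
  pose proof (admissible_inv_delta_ge1 s delta Had) as HD.
  destruct (proj1 HAsd n) as (CA & CAinv & _ & HAinv_maps).
  unfold Rdiv. rewrite <- pow_inv.
  assert (HP : 0 <= (/ delta) ^ (n * n)) by (apply pow_le; lra).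
  apply cnorm_le; apply cnorm_star_le; intros i x Hi Hx.
  - apply Rle_trans with (C1 * (/ delta) ^ (n * n));
      [| apply Rmult_le_compat_r; [exact HP | apply Rmax_l]].
    apply (HC1 (A s delta) h); [exact CA | exact Ch | exact HD | | exact Hi | exact Hx].
    intros y Hy. split; intros k Hk.
    + apply (A_hyp_Derive_n_bound rho s delta _ (Ainv s delta)); [exact HAsd | exact Hd |].
      apply Hh_maps, Hy.
    + rewrite Rmult_1_r. now apply HMh.
  - apply Rle_trans with (C2 * (/ delta) ^ (n * n));
      [| apply Rmult_le_compat_r; [exact HP | apply Rmax_r]].
    apply (HC2 hinv (Ainv s delta)); [exact Chinv | exact CAinv | exact HD | | exact Hi | exact Hx].
    intros y Hy. split; intros k Hk.
    + rewrite Rmult_1_r. apply HMi; [exact Hk | apply HAinv_maps, Hy].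
    + now apply (A_hyp_Derive_n_bound rho s delta (A s delta)).
Qed.
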